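(* Let $\lambda_1,\lambda_2>0$ and consider the linear saddle $\dot x=\lambda_1x$, $\dot y=-\lambda_2y$ in the bidisc $\{|x|,|y|\le1\}\subset\mathbb{C}^2$, with first integral $H=x^{1/\lambda_1}y^{1/\lambda_2}$. Fix $0<h<1$ and let $U_s=\{|H|<h\}\cap\{|x|,|y|\le1\}$. Then there exists a pair $v=(v_1,v_I)$ of smooth real vector fields on $U_s$ satisfying $d(\log H)(v_1)=1$ and $d(\log H)(v_I)=i$, such that: (1) both the negative-time flow of $v_1$ and the flow of $v_I$ do not increase $|x|$ and $|y|$; (2) both $v_1$ and $v_I$ are tangent to the lines $\{y=\mathrm{const}\}$ near $(0,1)$ and to the lines $\{x=\mathrm{const}\}$ near $(1,0)$.
   Context: $d(\log H)$ denotes the differential of any local branch of $\log H$ (which is single-valued as a one-form). A real vector field on $\mathbb{C}^2$ is a vector field on the underlying $\mathbb{R}^4$. *)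

(* C is modelled as R * R (real part, imaginary
   part); C^2 = C * C is then the underlying real 4-dimensional space. *)
From HB Require Import structures.
From mathcomp Require Import all_boot all_order all_algebra.
From mathcomp Require Import all_classical all_reals all_analysis.
Set Implicit Arguments. Unset Strict Implicit. Unset Printing Implicit Defensive.
Import Order.TTheory GRing.Theory Num.Theory.
Import numFieldNormedType.Exports.
Local Open Scope classical_set_scope.
Local Open Scope ring_scope.

Section Defs.
Variable R : realType.

Definition cplx := (R * R)%type.
Definition C2 := (cplx * cplx)%type.

Definition cmul (z w : cplx) : cplx := (z.1 * w.1 - z.2 * w.2, z.1 * w.2 + z.2 * w.1).
Definition cinv (z : cplx) : cplx :=
  (z.1 / (z.1 ^+ 2 + z.2 ^+ 2), - z.2 / (z.1 ^+ 2 + z.2 ^+ 2)).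
Definition cdiv (z w : cplx) : cplx := cmul z (cinv w).
Definition cmod (z : cplx) : R := Num.sqrt (z.1 ^+ 2 + z.2 ^+ 2).
Definition cI : cplx := (0, 1).
Definition c1 : cplx := (1, 0).

Definition absH (l1 l2 : R) (p : C2) : R :=
  powR (cmod p.1) (l1^-1) * powR (cmod p.2) (l2^-1).

Definition Us (l1 l2 h : R) : set C2 :=
  [set p | absH l1 l2 p < h /\ cmod p.1 <= 1 /\ cmod p.2 <= 1].

(* d(log H) at p (with x y <> 0) applied to a real tangent vector w = (w_x, w_y):
   since log H = (1/l1) log x + (1/l2) log y (any branch),
   d(log H)(w) = w_x / (l1 x) + w_y / (l2 y). *)
Definition dlogH (l1 l2 : R) (p w : C2) : cplx :=
  cdiv w.1 (cmul (l1, 0) p.1) + cdiv w.2 (cmul (l2, 0) p.2).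

Fixpoint iterD (vs : seq C2) (f : C2 -> C2) : C2 -> C2 :=
  match vs with
  | [::] => f
  | u :: us => fun q => derive (iterD us f) q u
  end.

Definition smooth_on (O : set C2) (f : C2 -> C2) : Prop :=
  forall (vs : seq C2) (q : C2), O q -> differentiable (iterD vs f) q.

Definition smooth_on_set (A : set C2) (f : C2 -> C2) : Prop :=
  exists O : set C2, open O /\ A `<=` O /\ smooth_on O f.

Definition integral_curve (A : set C2) (w : C2 -> C2) (a b : R) (g : R -> C2) : Prop :=
  forall t, a < t < b -> A (g t) /\ is_derive t 1 g (w (g t)).

Definition flow_nonincr_xy (A : set C2) (w : C2 -> C2) : Prop :=
  forall (a b : R) (g : R -> C2), integral_curve A w a b g ->
    forall s t, a < s -> s <= t -> t < b ->
      cmod (g t).1 <= cmod (g s).1 /\ cmod (g t).2 <= cmod (g s).2.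

Definition pt01 : C2 := ((0, 0), (1, 0)).
Definition pt10 : C2 := ((1, 0), (0, 0)).

Definition tangent_y_const_near (A : set C2) (p0 : C2) (w : C2 -> C2) : Prop :=
  exists e : R, 0 < e /\ forall p, A p -> ball p0 e p -> (w p).2 = 0.
Definition tangent_x_const_near (A : set C2) (p0 : C2) (w : C2 -> C2) : Prop :=
  exists e : R, 0 < e /\ forall p, A p -> ball p0 e p -> (w p).1 = 0.

End Defs.

From Pilot Require Import Defs.
From HB Require Import structures.
From mathcomp Require Import all_boot all_order all_algebra.
From mathcomp Require Import all_classical all_reals all_analysis.
From mathcomp Require Import ring lra.
Import Order.TTheory GRing.Theory Num.Theory.
Import numFieldNormedType.Exports.
Set Implicit Arguments. Unset Strict Implicit. Unset Printing Implicit Defensive.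
Local Open Scope classical_set_scope.
Local Open Scope ring_scope.

(* Take v1 = (a l1 x, b l2 y) and vI = (i a l1 x, i b l2 y), where (a, b) is a
   smooth partition of unity depending on |y|^2 only, with b = 0 near |y| = 1 and
   a = 0 near y = 0.  As d(log H) = dx / (l1 x) + dy / (l2 y), this gives
   d(log H)(v1) = a + b = 1 and d(log H)(vI) = i.  The field -v1 points radially
   inward in each coordinate, so its flow does not increase |x| and |y|, while vI
   rotates each coordinate and so preserves them.  Smoothness of a and b comes
   from the flat function t |-> exp(-1/t) (t > 0), 0 (t <= 0): its derivatives
   are all of the form P(1/t) exp(-1/t), which is o(t) at 0. *)

Section SmoothFunctions.
Variables (R : realType) (V : normedModType R).

Definition smooth_real (phi : R -> R) := forall k t, derivable (derive1n k phi) t 1.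

Fixpoint Cn (n : nat) (f : V -> R) : Prop :=
  (forall q, differentiable f q) /\
  (if n is m.+1 then forall u, Cn m (fun q => derive f q u) else True).

Definition smooth (f : V -> R) := forall n, Cn n f.

Lemma Cn_differentiable n f : Cn n f -> forall q, differentiable f q.
Proof. by case: n => [|n] []. Qed.

Lemma CnS n f : Cn n.+1 f -> Cn n f.
Proof.
elim: n f => [|n IH] f [df Hf]; first by split.
by split => // u; apply: IH; apply: Hf.
Qed.

Lemma Cn_cst n (c : R) : Cn n (fun _ => c).
Proof.
elim: n c => [|n IH] c; split => //; try by move=> q; exact: differentiable_cst.
move=> u; have -> : (fun q => derive (fun _ : V => c) q u) = (fun _ => 0).
  by apply: funext => q; exact: derive_cst.
exact: IH.
Qed.

Lemma CnD n f g : Cn n f -> Cn n g -> Cn n (fun q => f q + g q).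
Proof.
elim: n f g => [|n IH] f g Hf Hg; (split => //; first by move=> q;
  exact: differentiableD (Cn_differentiable Hf q) (Cn_differentiable Hg q)).
move=> u; have -> : (fun q => derive (fun q => f q + g q) q u) =
    (fun q => derive f q u + derive g q u).
  apply: funext => q; change (derive (f + g) q u = derive f q u + derive g q u).
  apply: deriveD; apply: diff_derivable.
    exact: Cn_differentiable Hf q.
  exact: Cn_differentiable Hg q.
by apply: IH; [apply: Hf.2 | apply: Hg.2].
Qed.

Lemma CnM n f g : Cn n f -> Cn n g -> Cn n (fun q => f q * g q).
Proof.
elim: n f g => [|n IH] f g Hf Hg; (split => //; first by move=> q;
  exact: differentiableM (Cn_differentiable Hf q) (Cn_differentiable Hg q)).
move=> u; have -> : (fun q => derive (fun q => f q * g q) q u) =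
    (fun q => f q * derive g q u + g q * derive f q u).
  apply: funext => q.
  change (derive (f * g) q u = f q *: derive g q u + g q *: derive f q u).
  apply: deriveM; apply: diff_derivable.
    exact: Cn_differentiable Hf q.
  exact: Cn_differentiable Hg q.
by apply: CnD; apply: IH; [exact: CnS | exact: Hg.2 | exact: CnS | exact: Hf.2].
Qed.

Lemma CnV n f : (forall q, f q != 0) -> Cn n f -> Cn n (fun q => (f q)^-1).
Proof.
move=> f0; elim: n f f0 => [|n IH] f f0 Hf; (split => //;
  first by move=> q; exact: (differentiableV (Cn_differentiable Hf q) (f0 q))).
move=> u; have -> : (fun q => derive (fun q => (f q)^-1) q u) =
    (fun q => - 1 * ((f q)^-1 * (f q)^-1 * derive f q u)).
  apply: funext => q; rewrite (deriveV (f0 q)); last first.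
    exact: diff_derivable (Cn_differentiable Hf q).
  by rewrite -exprVn expr2 mulN1r scaleNr.
apply: CnM; first exact: Cn_cst.
by apply: CnM; [apply: CnM; apply: IH => //; exact: CnS | exact: Hf.2].
Qed.

Lemma Cn_comp n phi f : smooth_real phi -> Cn n f -> Cn n (fun q => phi (f q)).
Proof.
have dphi phi' t : smooth_real phi' -> differentiable phi' t.
  by move=> Hp; apply/derivable1_diffP; exact: (Hp 0%N t).
elim: n phi f => [|n IH] phi f Hp Hf; (split => //;
  first by move=> q; exact: differentiable_comp (Cn_differentiable Hf q) (dphi _ _ Hp)).
move=> u; have -> : (fun q => derive (fun q => phi (f q)) q u) =
    (fun q => derive1 phi (f q) * derive f q u).
  apply: funext => q; have dfq := Cn_differentiable Hf q.
  have dpq : differentiable phi (f q) := dphi _ _ Hp.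
  rewrite deriveE; last exact: differentiable_comp.
  rewrite (deriveE _ dfq); change (fun q => phi (f q)) with (phi \o f).
  by rewrite diff_comp //= diff1E // mulrC.
apply: CnM; last exact: Hf.2.
by apply: IH; [move=> k t; rewrite -derive1Sn; exact: Hp | exact: CnS].
Qed.

Lemma Cn_linear n (L : {linear V -> R}) : continuous L -> Cn n L.
Proof.
move=> Lc; case: n => [|n]; split => //; try (by move=> q; exact: linear_differentiable).
move=> u; have -> : (fun q => derive L q u) = (fun _ => L u).
  by apply: funext => q; rewrite deriveE ?diff_lin //; exact: linear_differentiable.
exact: Cn_cst.
Qed.

Lemma smooth_cst c : smooth (fun _ => c).
Proof. by move=> n; exact: Cn_cst. Qed.

Lemma smoothD f g : smooth f -> smooth g -> smooth (fun q => f q + g q).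
Proof. by move=> Hf Hg n; exact: CnD. Qed.

Lemma smoothM f g : smooth f -> smooth g -> smooth (fun q => f q * g q).
Proof. by move=> Hf Hg n; exact: CnM. Qed.

Lemma smoothN f : smooth f -> smooth (fun q => - f q).
Proof.
move=> Hf; have -> : (fun q => - f q) = (fun q => -1 * f q).
  by apply: funext => q; rewrite mulN1r.
by apply: smoothM => //; exact: smooth_cst.
Qed.

Lemma smoothV f : (forall q, f q != 0) -> smooth f -> smooth (fun q => (f q)^-1).
Proof. by move=> f0 Hf n; exact: CnV. Qed.

Lemma smooth_comp phi f : smooth_real phi -> smooth f -> smooth (fun q => phi (f q)).
Proof. by move=> Hp Hf n; exact: Cn_comp. Qed.

Lemma smooth_linear (L : {linear V -> R}) : continuous L -> smooth L.
Proof. by move=> Lc n; exact: Cn_linear. Qed.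

Lemma smooth_differentiable f q : smooth f -> differentiable f q.
Proof. by move=> Hf; exact: Cn_differentiable (Hf 0%N) q. Qed.

Fixpoint iter_derive (vs : seq V) (f : V -> R) : V -> R :=
  if vs is u :: us then fun q => derive (iter_derive us f) q u else f.

Lemma smooth_iter_derive vs f : smooth f -> smooth (iter_derive vs f).
Proof. by elim: vs => [|u us IH] //= Hf n; exact: (IH Hf n.+1).2. Qed.

End SmoothFunctions.

Lemma derive_pair (R : realType) (U V W : normedModType R) (f : U -> V) (g : U -> W) q u :
  differentiable f q -> differentiable g q ->
  derive (fun y => (f y, g y)) q u = (derive f q u, derive g q u).
Proof.
move=> df dg; rewrite deriveE; last exact: differentiable_pair.
by rewrite diff_pair // (deriveE _ df) (deriveE _ dg).
Qed.

Section C2Fields.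
Variable R : realType.

Definition xre (q : C2 R) : R := q.1.1.
Definition xim (q : C2 R) : R := q.1.2.
Definition yre (q : C2 R) : R := q.2.1.
Definition yim (q : C2 R) : R := q.2.2.

Let xre_linear : linear xre. Proof. by []. Qed.
Let xim_linear : linear xim. Proof. by []. Qed.
Let yre_linear : linear yre. Proof. by []. Qed.
Let yim_linear : linear yim. Proof. by []. Qed.
HB.instance Definition _ := GRing.isLinear.Build R (C2 R) R _ xre xre_linear.
HB.instance Definition _ := GRing.isLinear.Build R (C2 R) R _ xim xim_linear.
HB.instance Definition _ := GRing.isLinear.Build R (C2 R) R _ yre yre_linear.
HB.instance Definition _ := GRing.isLinear.Build R (C2 R) R _ yim yim_linear.

Lemma smooth_xre : smooth xre.
Proof. by apply: smooth_linear => q; apply: cvg_comp; [exact: cvg_fst | exact: cvg_fst].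
Qed.
Lemma smooth_xim : smooth xim.
Proof. by apply: smooth_linear => q; apply: cvg_comp; [exact: cvg_fst | exact: cvg_snd].
Qed.
Lemma smooth_yre : smooth yre.
Proof. by apply: smooth_linear => q; apply: cvg_comp; [exact: cvg_snd | exact: cvg_fst].
Qed.
Lemma smooth_yim : smooth yim.
Proof. by apply: smooth_linear => q; apply: cvg_comp; [exact: cvg_snd | exact: cvg_snd].
Qed.

Definition c2fun (f1 f2 f3 f4 : C2 R -> R) : C2 R -> C2 R :=
  fun q => ((f1 q, f2 q), (f3 q, f4 q)).

Section SmoothC2Field.
Variables f1 f2 f3 f4 : C2 R -> R.
Hypotheses (s1 : smooth f1) (s2 : smooth f2) (s3 : smooth f3) (s4 : smooth f4).

Lemma iterD_c2fun vs : Defs.iterD vs (c2fun f1 f2 f3 f4) =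
  c2fun (iter_derive vs f1) (iter_derive vs f2) (iter_derive vs f3) (iter_derive vs f4).
Proof.
have d f v q : smooth f -> differentiable (iter_derive v f) q.
  by move=> sf; apply/smooth_differentiable/smooth_iter_derive.
elim: vs => [|u us IH] //=; rewrite IH; apply: funext => q.
by rewrite /c2fun !derive_pair //; try apply: differentiable_pair; apply: d.
Qed.

Lemma smooth_on_set_c2fun A : smooth_on_set A (c2fun f1 f2 f3 f4).
Proof.
exists setT; split; first exact: openT.
split => // vs q _; rewrite iterD_c2fun.
by do 2 apply: differentiable_pair; apply/smooth_differentiable/smooth_iter_derive.
Qed.

End SmoothC2Field.
End C2Fields.

Section FlatFunction.
Variable R : realType.

Lemma normr_horner_le (P : {poly R}) (u : R) : 1 <= u ->
  `|P.[u]| <= (\sum_(i < size P) `|P`_i|) * u ^+ size P.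
Proof.
move=> u1; rewrite horner_coef big_distrl /=.
apply: (le_trans (ler_norm_sum _ _ _)); apply: ler_sum => i _.
rewrite normrM normrX (ger0_norm (le_trans ler01 u1)).
by apply: ler_wpM2l => //; apply: ler_weXn2l => //; exact: ltnW (ltn_ord i).
Qed.

Lemma expRN_le (u : R) (n : nat) : 0 < u -> expR (- u) <= n.+1`!%:R / u ^+ n.+1.
Proof.
move=> u0; rewrite expRN.
have le_exp : u ^+ n.+1 / n.+1`!%:R <= expR u.
  by apply: le_trans (expR_ge1Dxn n (ltW u0)); rewrite lerDr.
have gt0 : 0 < u ^+ n.+1 / n.+1`!%:R.
  by apply: divr_gt0; [exact: exprn_gt0 | rewrite ltr0n fact_gt0].
by rewrite -[_ / u ^+ _]invf_div lef_pV2 ?posrE ?expR_gt0.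
Qed.

Lemma flat_bound (P : {poly R}) : exists2 C : R, 0 <= C &
  forall h : R, 0 < h -> h <= 1 -> `|P.[h^-1]| * expR (- h^-1) <= C * h ^+ 2.
Proof.
set S := \sum_(i < size P) `|P`_i|; set d := size P.
have S0 : 0 <= S by apply: sumr_ge0.
exists (S * d.+2`!%:R) => [|h h0 h1]; first exact: mulr_ge0.
have u1 : 1 <= h^-1 by rewrite invf_ge1.
have u0 : 0 < h^-1 by rewrite invr_gt0.
apply: le_trans (ler_pM (normr_ge0 _) (expR_ge0 _) (normr_horner_le P u1)
  (expRN_le d.+1 u0)) _.
rewrite -/S -/d !exprSr le_eqVlt; apply/orP; left; apply/eqP.
by field; rewrite gt_eqF // expf_neq0 // invr_eq0 gt_eqF.
Qed.

Definition flat (P : {poly R}) (t : R) : R :=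
  if 0 < t then P.[t^-1] * expR (- t^-1) else 0.

Definition flat_dpoly (P : {poly R}) : {poly R} := 'X^2 * (P - P^`()).

Lemma is_derive_flat_gt0 (P : {poly R}) (t : R) : 0 < t ->
  is_derive t 1 (flat P) (flat (flat_dpoly P) t).
Proof.
move=> t0; have tn0 : t != 0 by rewrite gt_eqF.
have dinv : is_derive t 1 (fun s : R => s^-1) (- (t ^+ 2)^-1).
  by have := is_deriveV tn0 (is_derive_id t 1); rewrite scaler1.
have dP : is_derive t 1 (horner P \o (fun s : R => s^-1)) (P^`().[t^-1] * - (t ^+ 2)^-1).
  exact: is_derive1_comp.
have dNinv : is_derive t 1 (fun s : R => - s^-1) ((t ^+ 2)^-1).
  by rewrite -[X in is_derive _ _ _ X]opprK; apply: is_deriveN.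
have dexp : is_derive t 1 (expR \o (fun s : R => - s^-1)) (expR (- t^-1) * (t ^+ 2)^-1).
  exact: is_derive1_comp.
have -> : flat (flat_dpoly P) t =
    (horner P \o (fun s : R => s^-1)) t *: (expR (- t^-1) * (t ^+ 2)^-1) +
    (expR \o (fun s : R => - s^-1)) t *: (P^`().[t^-1] * - (t ^+ 2)^-1).
  rewrite /flat t0 /flat_dpoly /= hornerM hornerXn hornerD hornerN /GRing.scale /=.
  by field.
apply: near_eq_is_derive (is_deriveM dP dexp); near=> s.
have s0 : 0 < s by near: s; exact: lt_nbhsr.
by rewrite /flat s0.
Unshelve. all: by end_near.
Qed.

Lemma is_derive_flat_lt0 (P : {poly R}) (t : R) : t < 0 ->
  is_derive t 1 (flat P) (flat (flat_dpoly P) t).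
Proof.
move=> t0; have -> : flat (flat_dpoly P) t = 0 by rewrite /flat ltNge ltW.
apply: near_eq_is_derive (is_derive_cst (0 : R) t 1); near=> s.
have s0 : s < 0 by near: s; exact: lt_nbhsl.
by rewrite /flat ltNge ltW.
Unshelve. all: by end_near.
Qed.

Lemma flat0 (P : {poly R}) : flat P 0 = 0.
Proof. by rewrite /flat ltxx. Qed.

(* By [flat_bound] the difference quotient at [0] is [O(h)]. *)
Lemma is_derive_flat0 (P : {poly R}) :
  is_derive (0 : R) (1 : R) (flat P) (flat (flat_dpoly P) 0).
Proof.
rewrite flat0; have [C C0 HC] := flat_bound P.
have L : (fun h : R => h^-1 *: ((flat P \o shift (0 : R)) (h *: (1 : R)) - flat P 0))
    @ (0 : R)^' --> (0 : R).
  apply/cvgrPdist_le => eps eps0.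
  have r0 : 0 < Num.min 1 (eps / (C + 1)) by rewrite lt_min ltr01 /= divr_gt0 // ltr_wpDl.
  near=> h; have hr : `|h| < Num.min 1 (eps / (C + 1)) by near: h; exact: dnbhs0_lt.
  rewrite flat0 subr0 sub0r normrN /= /shift addr0 [_%:A]mulr1 /flat.
  case: ifPn => h0; last by rewrite scaler0 normr0 ltW.
  move: hr; rewrite lt_min (gtr0_norm h0) => /andP[h1 he].
  rewrite /GRing.scale /= !normrM (gtr0_norm (expR_gt0 _)).
  rewrite (gtr0_norm (_ : 0 < h^-1)) ?invr_gt0 //.
  apply: (le_trans (ler_wpM2l _ (HC h h0 (ltW h1)))); first by rewrite invr_ge0 ltW.
  have -> : h^-1 * (C * h ^+ 2) = C * h by field; rewrite gt_eqF.
  have hC : h * (C + 1) < eps by rewrite -ltr_pdivlMr // ltr_wpDl.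
  nra.
apply: DeriveDef; first by apply/cvg_ex; exists 0.
exact: cvg_lim L.
Unshelve. all: by end_near.
Qed.

Lemma is_derive_flat (P : {poly R}) (t : R) :
  is_derive t 1 (flat P) (flat (flat_dpoly P) t).
Proof.
case: (ltgtP t 0) => [t0|t0|->]; first exact: is_derive_flat_lt0.
  exact: is_derive_flat_gt0.
exact: is_derive_flat0.
Qed.

Lemma derive1n_flat (P : {poly R}) k : derive1n k (flat P) = flat (iter k flat_dpoly P).
Proof.
elim: k => [|k IH]; first by rewrite derive1n0.
rewrite derive1nS IH; apply: funext => t; rewrite derive1E.
by have [_ ->] := is_derive_flat (iter k flat_dpoly P) t.
Qed.

Lemma smooth_real_flat (P : {poly R}) : smooth_real (flat P).
Proof.
by move=> k t; rewrite derive1n_flat; have [] := is_derive_flat (iter k flat_dpoly P) t.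
Qed.

End FlatFunction.

Section Flows.
Variable R : realType.

Lemma is_derive_fst (U1 U2 : normedModType R) (g : R -> U1 * U2) (t : R) d :
  is_derive t 1 g d -> is_derive t 1 (fun s => (g s).1) d.1.
Proof.
move=> [dg <-].
have L : (fun h : R => (h^-1 *: ((g \o shift t) (h *: 1) - g t)).1) @ 0^' --> ('D_1 g t).1.
  exact: cvg_comp _ _ dg (cvg_fst (G := nbhs (_ : U2)) (F := nbhs (_ : U1))).
by apply: DeriveDef; [apply/cvg_ex; eexists; exact: L | exact: cvg_lim L].
Qed.

Lemma is_derive_snd (U1 U2 : normedModType R) (g : R -> U1 * U2) (t : R) d :
  is_derive t 1 g d -> is_derive t 1 (fun s => (g s).2) d.2.
Proof.
move=> [dg <-].
have L : (fun h : R => (h^-1 *: ((g \o shift t) (h *: 1) - g t)).2) @ 0^' --> ('D_1 g t).2.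
  exact: cvg_comp _ _ dg (cvg_snd (G := nbhs (_ : U2)) (F := nbhs (_ : U1))).
by apply: DeriveDef; [apply/cvg_ex; eexists; exact: L | exact: cvg_lim L].
Qed.

Lemma ler0_is_derive_nincr (f df : R -> R) (a b : R) :
  (forall t, a < t < b -> is_derive t 1 f (df t)) ->
  (forall t, a < t < b -> df t <= 0) ->
  forall s t, a < s -> s <= t -> t < b -> f t <= f s.
Proof.
move=> fD df_le0 s t as0 st tb.
have inab x : x \in `[s, t] -> a < x < b.
  by rewrite in_itv /= => /andP[sx xt]; rewrite (lt_le_trans as0 sx) (le_lt_trans xt tb).
have inab' x : x \in `]s, t[ -> a < x < b.
  by rewrite in_itv /= => /andP[sx xt]; apply: inab; rewrite in_itv /= !ltW.
apply: (@ler0_derive1_le_cc R f s t) => //.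
- by move=> x /inab' /fD [].
- by move=> x /inab' xab; rewrite derive1E; have [_ ->] := fD x xab; exact: df_le0.
- by apply: derivable_within_continuous => x /inab /fD [].
- by rewrite in_itv /= lexx st.
- by rewrite in_itv /= lexx st.
Qed.

Lemma is_derive_sqrnorm (z : R -> cplx R) (t : R) (dz : cplx R) :
  is_derive t 1 z dz ->
  is_derive t 1 (fun s => (z s).1 ^+ 2 + (z s).2 ^+ 2)
    (2 * ((z t).1 * dz.1 + (z t).2 * dz.2)).
Proof.
move=> zD; have z1D := is_derive_fst zD; have z2D := is_derive_snd zD.
under eq_fun do rewrite !expr2.
have := is_deriveD (is_deriveM z1D z1D) (is_deriveM z2D z2D).
by move/is_derive_eq; apply; rewrite /GRing.scale /=; ring.
Qed.

Lemma cmod_nincr (z dz : R -> cplx R) (a b : R) :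
  (forall t, a < t < b -> is_derive t 1 z (dz t)) ->
  (forall t, a < t < b -> (z t).1 * (dz t).1 + (z t).2 * (dz t).2 <= 0) ->
  forall s t, a < s -> s <= t -> t < b -> cmod (z t) <= cmod (z s).
Proof.
move=> zD z_in s t as0 st tb; rewrite /cmod ler_sqrt ?addr_ge0 ?sqr_ge0 //.
apply: (ler0_is_derive_nincr (f := fun s => (z s).1 ^+ 2 + (z s).2 ^+ 2)
  (df := fun t => 2 * ((z t).1 * (dz t).1 + (z t).2 * (dz t).2))) as0 st tb.
  by move=> u /zD /is_derive_sqrnorm.
by move=> u /z_in; rewrite pmulr_rle0.
Qed.

Lemma flow_nonincr_xy_inward (A : set (C2 R)) (w : C2 R -> C2 R) :
  (forall p, A p -> p.1.1 * (w p).1.1 + p.1.2 * (w p).1.2 <= 0) ->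
  (forall p, A p -> p.2.1 * (w p).2.1 + p.2.2 * (w p).2.2 <= 0) ->
  flow_nonincr_xy A w.
Proof.
move=> wx wy a b g gw s t as0 st tb; split.
- apply: (cmod_nincr (z := fun t => (g t).1) (dz := fun t => (w (g t)).1)) as0 st tb
    => u /gw[Agu gD]; [exact: is_derive_fst gD | exact: wx].
- apply: (cmod_nincr (z := fun t => (g t).2) (dz := fun t => (w (g t)).2)) as0 st tb
    => u /gw[Agu gD]; [exact: is_derive_snd gD | exact: wy].
Qed.

End Flows.

Section Weights.
Variable R : realType.

Lemma flat1_ge0 (t : R) : 0 <= flat 1 t.
Proof. by rewrite /flat; case: ifP => // _; rewrite hornerC mul1r expR_ge0. Qed.

Lemma flat1_gt0 (t : R) : 0 < t -> 0 < flat 1 t.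
Proof. by move=> t0; rewrite /flat t0 hornerC mul1r expR_gt0. Qed.

Lemma flat_le0 (P : {poly R}) (t : R) : t <= 0 -> flat P t = 0.
Proof. by move=> t0; rewrite /flat ltNge t0. Qed.

Definition ysqr (q : C2 R) : R := q.2.1 * q.2.1 + q.2.2 * q.2.2.

(* [weight_x] vanishes where [|y|^2 <= 1/4] and [weight_y] where [|y|^2 >= 1/2]. *)
Definition cut_x (q : C2 R) : R := flat 1 (ysqr q - 4^-1).
Definition cut_y (q : C2 R) : R := flat 1 (2^-1 - ysqr q).
Definition weight_x (q : C2 R) : R := cut_x q / (cut_x q + cut_y q).
Definition weight_y (q : C2 R) : R := cut_y q / (cut_x q + cut_y q).

Lemma cut_sum_gt0 q : 0 < cut_x q + cut_y q.
Proof.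
have := flat1_ge0 (ysqr q - 4^-1); have := flat1_ge0 (2^-1 - ysqr q).
rewrite /cut_x /cut_y; have [y_big | y_small] := ltP (4^-1 : R) (ysqr q).
  by have := flat1_gt0 (_ : 0 < ysqr q - 4^-1); rewrite subr_gt0 => /(_ y_big); lra.
have lt_half : 4^-1 < 2^-1 :> R by rewrite ltf_pV2 ?posrE ?ltr_nat.
have := flat1_gt0 (_ : 0 < 2^-1 - ysqr q); rewrite subr_gt0.
by move=> /(_ (le_lt_trans y_small lt_half)); lra.
Qed.

Lemma weight_x_ge0 q : 0 <= weight_x q.
Proof. by rewrite divr_ge0 ?flat1_ge0 // ltW // cut_sum_gt0. Qed.

Lemma weight_y_ge0 q : 0 <= weight_y q.
Proof. by rewrite divr_ge0 ?flat1_ge0 // ltW // cut_sum_gt0. Qed.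

Lemma weight_xD q : weight_x q + weight_y q = 1.
Proof. by rewrite -mulrDl divff // gt_eqF // cut_sum_gt0. Qed.

Lemma smooth_ysqr : smooth ysqr.
Proof. by apply: smoothD; apply: smoothM; (exact: smooth_yre || exact: smooth_yim). Qed.

Lemma smooth_cut_x : smooth cut_x.
Proof.
apply: smooth_comp; first exact: smooth_real_flat.
by apply: smoothD; [exact: smooth_ysqr | exact: smooth_cst].
Qed.

Lemma smooth_cut_y : smooth cut_y.
Proof.
apply: smooth_comp; first exact: smooth_real_flat.
by apply: smoothD; [exact: smooth_cst | exact: smoothN smooth_ysqr].
Qed.

Lemma smooth_cut_sumV : smooth (fun q => (cut_x q + cut_y q)^-1).
Proof.
apply: smoothV => [q|]; first by rewrite gt_eqF // cut_sum_gt0.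
exact: smoothD smooth_cut_x smooth_cut_y.
Qed.

Lemma smooth_weight_x : smooth weight_x.
Proof. exact: smoothM smooth_cut_x smooth_cut_sumV. Qed.

Lemma smooth_weight_y : smooth weight_y.
Proof. exact: smoothM smooth_cut_y smooth_cut_sumV. Qed.

Lemma weight_y_near01 (p : C2 R) : ball (pt01 R) 4^-1 p -> weight_y p = 0.
Proof.
move=> [[_ _] [/= + _]]; rewrite /ball /= ltr_norml => /andP[_ y1].
rewrite /weight_y /cut_y flat_le0 ?mul0r // /ysqr.
have y1_ge : 3 / 4 <= p.2.1 by rewrite -div1r in y1; lra.
have : 9 / 16 <= p.2.1 * p.2.1 by nra.
have := sqr_ge0 p.2.2; rewrite expr2 -div1r; lra.
Qed.

Lemma weight_x_near10 (p : C2 R) : ball (pt10 R) 4^-1 p -> weight_x p = 0.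
Proof.
move=> [_ [/= + +]]; rewrite /ball /= !sub0r !normrN => y1 y2.
rewrite /weight_x /cut_x flat_le0 ?mul0r // /ysqr.
have sqr_small (t : R) : `|t| < 4^-1 -> t * t <= 1 / 16.
  by rewrite ltr_norml -div1r => /andP[t1 t2]; nra.
by have := sqr_small _ y1; have := sqr_small _ y2; rewrite -div1r; lra.
Qed.

End Weights.

Lemma sqr_norm_gt0 (R : realType) (z : cplx R) : z != 0 -> 0 < z.1 ^+ 2 + z.2 ^+ 2.
Proof.
case: z => x y nz; rewrite /= lt_neqAle addr_ge0 ?sqr_ge0 // andbT eq_sym.
by rewrite paddr_eq0 ?sqr_ge0 // !sqrf_eq0; apply: contra nz => /andP[/eqP -> /eqP ->].
Qed.

Section ScaledQuotients.
Variables (R : realType) (c l : R) (z : cplx R).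
Hypotheses (l0 : l != 0) (z0 : z != 0).

Let scaled_sqr_norm_neq0 : (l * z.1) ^+ 2 + (l * z.2) ^+ 2 != 0.
Proof.
have -> : (l * z.1) ^+ 2 + (l * z.2) ^+ 2 = l ^+ 2 * (z.1 ^+ 2 + z.2 ^+ 2) by ring.
by rewrite mulf_neq0 ?sqrf_eq0 // gt_eqF // sqr_norm_gt0.
Qed.

Lemma cdiv_scale : cdiv (c * (l * z.1), c * (l * z.2)) (cmul (l, 0) z) = (c, 0).
Proof.
move: scaled_sqr_norm_neq0; rewrite /cdiv /cmul /cinv /= !mul0r !subr0 !addr0.
by move=> s0; congr pair; field.
Qed.

Lemma cdiv_scaleI : cdiv (- (c * (l * z.2)), c * (l * z.1)) (cmul (l, 0) z) = (0, c).
Proof.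
move: scaled_sqr_norm_neq0; rewrite /cdiv /cmul /cinv /= !mul0r !subr0 !addr0.
by move=> s0; congr pair; field.
Qed.

End ScaledQuotients.

Section VectorFields.
Variables (R : realType) (l1 l2 : R).

Definition v1 : C2 R -> C2 R :=
  c2fun (fun q => weight_x q * (l1 * q.1.1)) (fun q => weight_x q * (l1 * q.1.2))
        (fun q => weight_y q * (l2 * q.2.1)) (fun q => weight_y q * (l2 * q.2.2)).

Definition vI : C2 R -> C2 R :=
  c2fun (fun q => - (weight_x q * (l1 * q.1.2))) (fun q => weight_x q * (l1 * q.1.1))
        (fun q => - (weight_y q * (l2 * q.2.2))) (fun q => weight_y q * (l2 * q.2.1)).

Lemma smooth_on_set_v1 A : smooth_on_set A v1.
Proof.
have sx := @smooth_weight_x R; have sy := @smooth_weight_y R.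
apply: smooth_on_set_c2fun; apply: smoothM => //; (apply: smoothM; first exact: smooth_cst).
- exact: smooth_xre.
- exact: smooth_xim.
- exact: smooth_yre.
- exact: smooth_yim.
Qed.

Lemma smooth_on_set_vI A : smooth_on_set A vI.
Proof.
have sx := @smooth_weight_x R; have sy := @smooth_weight_y R.
apply: smooth_on_set_c2fun; try apply: smoothN; apply: smoothM => //;
  (apply: smoothM; first exact: smooth_cst).
- exact: smooth_xim.
- exact: smooth_xre.
- exact: smooth_yim.
- exact: smooth_yre.
Qed.

Lemma tangent_y_const_near_v1 A : tangent_y_const_near A (pt01 R) v1.
Proof.
exists 4^-1; split => [|p _ /weight_y_near01 w0]; first by rewrite invr_gt0.
by rewrite /v1 /c2fun /= w0 !mul0r.
Qed.

Lemma tangent_y_const_near_vI A : tangent_y_const_near A (pt01 R) vI.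
Proof.
exists 4^-1; split => [|p _ /weight_y_near01 w0]; first by rewrite invr_gt0.
by rewrite /vI /c2fun /= w0 !mul0r oppr0.
Qed.

Lemma tangent_x_const_near_v1 A : tangent_x_const_near A (pt10 R) v1.
Proof.
exists 4^-1; split => [|p _ /weight_x_near10 w0]; first by rewrite invr_gt0.
by rewrite /v1 /c2fun /= w0 !mul0r.
Qed.

Lemma tangent_x_const_near_vI A : tangent_x_const_near A (pt10 R) vI.
Proof.
exists 4^-1; split => [|p _ /weight_x_near10 w0]; first by rewrite invr_gt0.
by rewrite /vI /c2fun /= w0 !mul0r oppr0.
Qed.

Hypotheses (l1_gt0 : 0 < l1) (l2_gt0 : 0 < l2).

Lemma dlogH_v1 p : p.1 != 0 -> p.2 != 0 -> dlogH l1 l2 p (v1 p) = c1 R.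
Proof.
move=> x0 y0; rewrite /dlogH /v1 /c2fun /= !cdiv_scale ?gt_eqF //.
by rewrite /c1 -(weight_xD p) -[in RHS](addr0 0).
Qed.

Lemma dlogH_vI p : p.1 != 0 -> p.2 != 0 -> dlogH l1 l2 p (vI p) = cI R.
Proof.
move=> x0 y0; rewrite /dlogH /vI /c2fun /= !cdiv_scaleI ?gt_eqF //.
by rewrite /cI -(weight_xD p) -[in RHS](addr0 0).
Qed.

Let inward_radial (a l u w : R) : 0 <= a -> 0 <= l ->
  u * - (a * (l * u)) + w * - (a * (l * w)) <= 0.
Proof.
move=> a0 l0; have -> : u * - (a * (l * u)) + w * - (a * (l * w)) =
  - (a * l * (u ^+ 2 + w ^+ 2)) by ring.
by rewrite oppr_le0 !mulr_ge0 ?addr_ge0 ?sqr_ge0.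
Qed.

Let orthogonal_rotation (a l u w : R) : u * - (a * (l * w)) + w * (a * (l * u)) = 0.
Proof. by ring. Qed.

Lemma flow_nonincr_xy_Nv1 A : flow_nonincr_xy A (fun p => - v1 p).
Proof.
by apply: flow_nonincr_xy_inward => p _ /=;
  rewrite inward_radial ?weight_x_ge0 ?weight_y_ge0 ?ltW.
Qed.

Lemma flow_nonincr_xy_vI A : flow_nonincr_xy A vI.
Proof. by apply: flow_nonincr_xy_inward => p _ /=; rewrite orthogonal_rotation. Qed.

End VectorFields.

Theorem lemma3 (R : realType) (l1 l2 h : R) :
  0 < l1 -> 0 < l2 -> 0 < h -> h < 1 ->
  exists v1 vI : C2 R -> C2 R,
    smooth_on_set (Us l1 l2 h) v1 /\ smooth_on_set (Us l1 l2 h) vI /\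
    (forall p, Us l1 l2 h p -> p.1 != 0 -> p.2 != 0 ->
       dlogH l1 l2 p (v1 p) = c1 R /\ dlogH l1 l2 p (vI p) = cI R) /\
    flow_nonincr_xy (Us l1 l2 h) (fun p => - v1 p) /\
    flow_nonincr_xy (Us l1 l2 h) vI /\
    tangent_y_const_near (Us l1 l2 h) (pt01 R) v1 /\
    tangent_y_const_near (Us l1 l2 h) (pt01 R) vI /\
    tangent_x_const_near (Us l1 l2 h) (pt10 R) v1 /\
    tangent_x_const_near (Us l1 l2 h) (pt10 R) vI.
Proof.
move=> l1_gt0 l2_gt0 _ _; exists (v1 l1 l2), (vI l1 l2).
split; first exact: smooth_on_set_v1.
split; first exact: smooth_on_set_vI.
split; first by move=> p _ x0 y0; rewrite dlogH_v1 ?dlogH_vI.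
split; first exact: flow_nonincr_xy_Nv1.
split; first exact: flow_nonincr_xy_vI.
split; first exact: tangent_y_const_near_v1.
split; first exact: tangent_y_const_near_vI.
split; first exact: tangent_x_const_near_v1.
exact: tangent_x_const_near_vI.
Qed.
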